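(* Let $D$ be a series-parallel digraph with a fixed binary decomposition tree, and let $\boldsymbol{P}^*$ be an optimal path profile for \textsc{Min-Max Disjoint Paths} on $D$ with $k$ paths. Let $\ast\in\{\circ,\parallel\}$ and let $D'=D^{(1)}\ast D^{(2)}\sqsubseteq D$, where $D^{(1)},D^{(2)}$ are the graphs of the two children of the tree vertex of $D'$. If $\boldsymbol{Q}$ is a path profile in $D^{(1)}$ and $\boldsymbol{R}$ is a path profile in $D^{(2)}$ that are both consistent with $\boldsymbol{P}^*$ and balanced (in $D^{(1)}$, resp. $D^{(2)}$), then their greedy composition $\boldsymbol{P}=\boldsymbol{Q}\ast\boldsymbol{R}$ is a path profile in $D'$ that is consistent with $\boldsymbol{P}^*$ and balanced in $D'$.
   Context: A series-parallel digraph is a single arc, a series composition $D'\circ D''$ (sink of $D'$ identified with source of $D''$) or a parallel composition $D'\parallel D''$ (sources identified, sinks identified) of series-parallel digraphs; a binary decomposition tree has leaves = arcs and internal vertices labeled $S$/$P$ representing series/parallel composition of their children's graphs. $D'\sqsubseteq D$ denotes the subgraph represented by some vertex of the fixed tree, with source $s'$ and sink $t'$. \textsc{Min-Max Disjoint Paths} on $D$ with travel times $\tau\ge0$: find $k$ pairwise arc-disjoint $s$-$t$-paths minimizing the maximum length. A path profile in $D'$ is a tuple of pairwise arc-disjoint $s'$-$t'$-paths in $D'$; for an $s$-$t$-path $P$ of $D$ using an arc of $D'$, $P\cap A(D')$ is an $s'$-$t'$-path. Notation: $\tau(P,D')=\sum_{a\in P\cap A(D')}\tau_a$, $C_{\max}(\boldsymbol{P},D')=\max_{P\in\boldsymbol{P}}\tau(P,D')$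 (with $0$ for an empty profile), $\theta(\boldsymbol{P},D')=\sum_{P\in\boldsymbol{P}}\tau(P,D')$. A profile $\boldsymbol{P}$ is consistent with $\boldsymbol{P}^*$ in $D'$ if $\boldsymbol{P}$ and $\boldsymbol{P}^*$ use the same number of paths in $D'$ and $\theta(\boldsymbol{P},D')\le\theta(\boldsymbol{P}^*,D')$. If $k'$ paths of $\boldsymbol{P}$ traverse $D'$ with lengths (in $D'$) $p_1\ge\dots\ge p_{k'}$, then $\boldsymbol{P}$ is balanced in $D'$ if $\frac1i\sum_{j=1}^ip_j-p_{i+1}\le C_{\max}(\boldsymbol{P}^*,D')$ for all $i\in[k'-1]$. Greedy composition: for series composition with $\boldsymbol{Q},\boldsymbol{R}$ having the same number of paths, concatenate the longest path of $\boldsymbol{Q}$ with the shortest of $\boldsymbol{R}$, the second-longest with the second-shortest, and so on (ties broken arbitrarily); for parallel composition, take the union of the paths of $\boldsymbol{Q}$ and $\boldsymbol{R}$. *)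

From HB Require Import structures.
From mathcomp Require Import all_boot all_order all_algebra.
Set Implicit Arguments. Unset Strict Implicit. Unset Printing Implicit Defensive.
Import Order.TTheory GRing.Theory Num.Theory.

Inductive sptree := Arc | Ser of sptree & sptree | Par of sptree & sptree.

Fixpoint nleaves (T : sptree) : nat :=
  match T with Arc => 1 | Ser l r | Par l r => nleaves l + nleaves r end.

(* number of internal vertices created by series compositions *)
Fixpoint nser (T : sptree) : nat :=
  match T with Arc => 0 | Ser l r => (nser l + nser r).+1
             | Par l r => nser l + nser r end.

(* An sparc is (id, (tail, head)); sparc ids are the leaf numbers (left to
   right), vertices are natural numbers. *)
Definition sparc := (nat * (nat * nat))%type.
Definition arc_id (a : sparc) : nat := a.1.
Definition arc_tail (a : sparc) : nat := a.2.1.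
Definition arc_head (a : sparc) : nat := a.2.2.

(* [build T s t fr off]: the sparc list of the series-parallel digraph
   represented by T, with source s, sink t, fresh internal vertices
   numbered from fr and sparc ids numbered from off.  Series composition
   identifies the sink of the left part with the source of the right
   part (new vertex fr); parallel composition identifies sources and
   sinks. *)
Fixpoint build (T : sptree) (s t fr off : nat) : seq sparc :=
  match T with
  | Arc => [:: (off, (s, t))]
  | Ser l r => build l s fr fr.+1 off ++
               build r fr t (fr.+1 + nser l) (off + nleaves l)
  | Par l r => build l s t fr off ++
               build r s t (fr + nser l) (off + nleaves l)
  end.

(* A subgraph represented by a vertex of the fixed tree, together with
   its position (source, sink, vertex/sparc numbering) inside D. *)
Record spg := SPG { sp_tree : sptree; sp_src : nat; sp_snk : nat;
                    sp_fr : nat; sp_off : nat }.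

Definition arcs (G : spg) : seq sparc :=
  build (sp_tree G) (sp_src G) (sp_snk G) (sp_fr G) (sp_off G).

Definition whole (T : sptree) : spg := SPG T 0 1 2 0.

(* The two children of a tree vertex (meaningless for a leaf). *)
Definition lchild (G : spg) : spg :=
  match sp_tree G with
  | Arc => G
  | Ser l _ => SPG l (sp_src G) (sp_fr G) (sp_fr G).+1 (sp_off G)
  | Par l _ => SPG l (sp_src G) (sp_snk G) (sp_fr G) (sp_off G)
  end.
Definition rchild (G : spg) : spg :=
  match sp_tree G with
  | Arc => G
  | Ser l r => SPG r (sp_fr G) (sp_snk G) ((sp_fr G).+1 + nser l)
                   (sp_off G + nleaves l)
  | Par l r => SPG r (sp_src G) (sp_snk G) (sp_fr G + nser l)
                   (sp_off G + nleaves l)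
  end.
Definition is_leaf (G : spg) : bool :=
  if sp_tree G is Arc then true else false.

(* D' ⊑ D : D' is represented by some vertex of the tree of D. *)
Inductive is_node (D : spg) : spg -> Prop :=
  | node_root : is_node D D
  | node_l G : is_node D G -> ~~ is_leaf G -> is_node D (lchild G)
  | node_r G : is_node D G -> ~~ is_leaf G -> is_node D (rchild G).

Definition is_path (A : seq sparc) (u v : nat) (p : seq sparc) : bool :=
  match p with
  | [::] => false
  | a :: p' =>
      [&& arc_tail a == u, arc_head (last a p') == v,
          path (fun x y => arc_head x == arc_tail y) a p',
          all (fun b => b \in A) p & uniq (u :: map arc_head p)]
  end.

Definition profile (G : spg) (ps : seq (seq sparc)) : bool :=
  all (is_path (arcs G) (sp_src G) (sp_snk G)) ps &&
  pairwise (fun p q => ~~ has (fun a => a \in q) p) ps.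

Definition uses (G : spg) (p : seq sparc) : bool :=
  has (fun a => a \in arcs G) p.

Local Open Scope ring_scope.

Section Lengths.
Variables (R : realFieldType) (tau : nat -> R).

Definition tauP (G : spg) (p : seq sparc) : R :=
  \sum_(a <- p | a \in arcs G) tau (arc_id a).

(* C_max(P, D') (0 for the empty profile) *)
Definition Cmax (G : spg) (ps : seq (seq sparc)) : R :=
  \big[Num.max/0]_(p <- ps) tauP G p.

Definition theta (G : spg) (ps : seq (seq sparc)) : R :=
  \sum_(p <- ps) tauP G p.

Definition optimal (D : spg) (k : nat) (Ps : seq (seq sparc)) : Prop :=
  [/\ profile D Ps, size Ps = k &
      forall P, profile D P -> size P = k -> Cmax D Ps <= Cmax D P].

Definition consistent (G : spg) (Ps P : seq (seq sparc)) : Prop :=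
  count (uses G) P = count (uses G) Ps /\ theta G P <= theta G Ps.

Definition sorted_lengths (G : spg) (P : seq (seq sparc)) : seq R :=
  sort (fun x y => y <= x) [seq tauP G p | p <- P & uses G p].

Definition balanced (G : spg) (Ps P : seq (seq sparc)) : Prop :=
  let L := sorted_lengths G P in
  forall i : nat, (0 < i < size L)%N ->
    (i%:R)^-1 * (\sum_(j < i) L`_j) - L`_i <= Cmax G Ps.

(* P is a greedy composition of Q (in lchild G) and R (in rchild G),
   for any tie-breaking *)
Definition greedy_comp (G : spg) (Q Rr P : seq (seq sparc)) : Prop :=
  match sp_tree G with
  | Arc => False
  | Ser _ _ =>
      size Q = size Rr /\
      exists Q' R', [/\ perm_eq Q Q', perm_eq Rr R',
        sorted (fun p q => tauP (lchild G) q <= tauP (lchild G) p) Q',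
        sorted (fun p q => tauP (rchild G) p <= tauP (rchild G) q) R' &
        P = [seq x.1 ++ x.2 | x <- zip Q' R']]
  | Par _ _ => P = Q ++ Rr
  end.

End Lengths.

(* For a threshold x and a list s of path lengths put excess x s := sum of max(y - x, 0)
   and nabove x s := #{y in s | y > x}.  A nonincreasing list L is balanced w.r.t. C
   exactly when excess (L_i) L <= nabove (L_i) L * C at each of its elements, so it is
   enough to show this excess bound for the lengths of P at every threshold x that some
   length does not exceed.

   Parallel composition: the lengths of P are those of Q and of R, and excess and nabove
   add up.  A side having a length <= x is bounded by its own balancedness; a side whose
   lengths all exceed x has excess at most theta(Q) <= theta(Ps) <= |Q| * Cmax(Ps), by
   consistency.

   Series composition: the lengths of P are q_i + r_i with q nonincreasing and r
   nondecreasing.  The indices with q_i + r_i > x form runs.  A run followed by an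
   index j with q_j + r_j <= x has excess at most its excess of q over q_j, which the
   balancedness of Q controls (for a nonincreasing list, balancedness bounds the mean
   excess of any block over the next element, not only of prefixes); the last run,
   preceded by such a j, is bounded symmetrically through r and the balancedness of R.

   Everything else is bookkeeping: the children share no arc (in series, no vertex but
   the middle one), a path of D through one child of a series vertex also runs through
   the other, and no path of D runs through both children of a parallel vertex. *)

From HB Require Import structures.
From mathcomp Require Import all_boot all_order all_algebra.
From mathcomp Require Import zify lra.
Set Implicit Arguments. Unset Strict Implicit. Unset Printing Implicit Defensive.
Import Order.TTheory GRing.Theory Num.Theory.
Local Open Scope ring_scope.

Lemma has_split_first (T : Type) (P : pred T) (s : seq T) : has P s ->
  exists s1 x s2, [/\ s = s1 ++ x :: s2, P x & all (predC P) s1].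
Proof.
elim: s => //= y s IH; case Py: (P y) => /= H; first by exists [::], y, s.
have [s1 [x [s2 [-> Px Hs1]]]] := IH H.
by exists (y :: s1), x, s2; rewrite /= Py.
Qed.

Local Notation geR := (fun x y => y <= x).
Local Notation psum := (fun z => z.1 + z.2).

Section Excess.
Variable R : realFieldType.
Implicit Types (C x n : R) (s t L : seq R).

Lemma geR_trans : transitive (geR : rel R).
Proof. by move=> y x z xy yz; apply: le_trans yz xy. Qed.

Lemma geR_total : total (geR : rel R).
Proof. by move=> x y; apply: le_total. Qed.

Lemma geR_anti : antisymmetric (geR : rel R).
Proof. by move=> x y /andP [yx xy]; apply: le_anti; rewrite xy yx. Qed.

Lemma sumr_const_seq (T : Type) (s : seq T) x : \sum_(y <- s) x = (size s)%:R * x.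
Proof. by rewrite big_const_seq count_predT iter_addr_0 mulr_natl. Qed.

Definition excess x s := \sum_(y <- s) Num.max (y - x) 0.
Definition nabove x s := count (fun y => x < y) s.

Lemma excess_cat x s t : excess x (s ++ t) = excess x s + excess x t.
Proof. by rewrite /excess big_cat. Qed.

Lemma nabove_cat x s t : nabove x (s ++ t) = (nabove x s + nabove x t)%N.
Proof. exact: count_cat. Qed.

Lemma excess_perm x s t : perm_eq s t -> excess x s = excess x t.
Proof. by move=> st; rewrite /excess (perm_big _ st). Qed.

Lemma nabove_perm x s t : perm_eq s t -> nabove x s = nabove x t.
Proof. by move=> /permP; apply. Qed.

Lemma excess_ge x s : all (fun y => x <= y) s -> excess x s = \sum_(y <- s) (y - x).
Proof.
move=> /allP xs; rewrite /excess big_seq [RHS]big_seq; apply: eq_bigr => y /xs xy.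
by apply/max_idPl; rewrite subr_ge0.
Qed.

Lemma excess_le x s : all (fun y => y <= x) s -> excess x s = 0.
Proof.
move=> /allP sx; rewrite /excess big_seq big1 // => y /sx yx.
by apply/max_idPr; rewrite subr_le0.
Qed.

Lemma excess_gt x s : all (fun y => x < y) s -> excess x s = \sum_(y <- s) (y - x).
Proof. by move=> /(sub_all (fun y => @ltW _ _ x y)) /excess_ge. Qed.

Lemma nabove_gt x s : all (fun y => x < y) s -> nabove x s = size s.
Proof. by rewrite all_count => /eqP. Qed.

Lemma nabove_le x s : all (fun y => y <= x) s -> nabove x s = 0%N.
Proof.
by move=> sx; apply/eqP; rewrite -leqn0 leqNgt -has_count -all_predC;
  apply: sub_all sx => y /=; rewrite -leNgt.
Qed.

Lemma all_gt_predC x s : all (predC (fun y => y <= x)) s -> all (fun y => x < y) s.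
Proof. by apply: sub_all => y /=; rewrite ltNge. Qed.

Definition balanced_seq C L := forall i : nat, (0 < i < size L)%N ->
  (i%:R)^-1 * (\sum_(j < i) L`_j) - L`_i <= C.

Lemma balanced_seqP C L : balanced_seq C L <->
  forall i : nat, (0 < i < size L)%N -> \sum_(y <- take i L) (y - L`_i) <= i%:R * C.
Proof.
suff eqi i : (0 < i < size L)%N ->
    ((i%:R)^-1 * (\sum_(j < i) L`_j) - L`_i <= C) =
    (\sum_(y <- take i L) (y - L`_i) <= i%:R * C).
  by split=> H i Hi; [rewrite -(eqi i Hi) | rewrite (eqi i Hi)]; apply: H.
move=> /andP [i_gt0 iL]; have i_pos : (0 : R) < i%:R by rewrite ltr0n.
have sum_take : \sum_(j < i) L`_j = \sum_(y <- take i L) y.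
  rewrite (big_nth 0) big_mkord size_takel ?(ltnW iL) //.
  by apply: eq_bigr => j _; rewrite nth_take.
rewrite sumrB sumr_const_seq size_takel ?(ltnW iL) // sum_take.
rewrite -(ler_pM2l i_pos) mulrBr mulrA divff ?mul1r ?lt0r_neq0 //.
Qed.

Lemma sorted_geR_split L i : sorted geR L -> (i < size L)%N ->
  all (fun y => L`_i <= y) (take i L) /\ all (fun y => y <= L`_i) (drop i L).
Proof.
move=> sL iL; have := sL; rewrite (sorted_pairwise geR_trans).
rewrite -[L in pairwise _ L](cat_take_drop i) [drop _ _](drop_nth 0 iL) pairwise_cat /=.
move=> /and3P [/allrelP before _ /andP [after _]]; split.
  by apply/allP => y yL; apply: before yL (mem_head _ _).
by rewrite /= lexx.
Qed.

Lemma balanced_sort_of_excess C s : 0 <= C ->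
  (forall x, has (fun y => y <= x) s -> excess x s <= (nabove x s)%:R * C) ->
  balanced_seq C (sort geR s).
Proof.
move=> C_ge0 Hexc; apply/balanced_seqP => i /andP [_ iL].
set L := sort geR s in iL *; set x := L`_i.
have sL : perm_eq L s by rewrite perm_sort.
have sortedL : sorted geR L by apply: sort_sorted geR_total s.
have [above below] := sorted_geR_split sortedL iL.
have := Hexc x; rewrite -(excess_perm x sL) -(nabove_perm x sL).
rewrite -[L in excess _ L](cat_take_drop i) -[L in nabove _ L](cat_take_drop i).
rewrite excess_cat nabove_cat (excess_ge above) (excess_le below) (nabove_le below).
rewrite addr0 addn0.
have x_in_s : has (fun y => y <= x) s.
  by apply/hasP; exists x; rewrite ?lexx // -(perm_mem sL) mem_nth.
move=> /(_ x_in_s) le_exc; apply: le_trans le_exc _; apply: ler_wpM2r => //.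
by rewrite ler_nat; apply: leq_trans (count_size _ _) _; rewrite size_take iL.
Qed.

(* [gaps_before C L] is what balancedness gives for a nonincreasing L, and
   [gaps_after C L] its mirror image for a nondecreasing L. *)
Definition gaps_before C s := forall h t n s', s = h ++ t ++ n :: s' ->
  \sum_(y <- t) (y - n) <= (size t)%:R * C.

Definition gaps_after C s := forall h n t, s = h ++ n :: t ->
  \sum_(y <- t) (y - n) <= (size t)%:R * C.

Lemma gaps_before_drop C s s' : gaps_before C (s' ++ s) -> gaps_before C s.
Proof. by move=> H h t n s'' E; apply: (H (s' ++ h)); rewrite E catA. Qed.

Lemma gaps_after_drop C s s' : gaps_after C (s' ++ s) -> gaps_after C s.
Proof. by move=> H h n t E; apply: (H (s' ++ h)); rewrite E catA. Qed.

Lemma gaps_before_le C C' s : C <= C' -> gaps_before C s -> gaps_before C' s.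
Proof.
move=> CC' H h t n s' E; apply: le_trans (H h t n s' E) _.
by apply: ler_wpM2l.
Qed.

Lemma gaps_after_rev C s : gaps_before C (rev s) -> gaps_after C s.
Proof.
move=> H h n t E; have := H [::] (rev t) n (rev h).
by rewrite E rev_cat rev_cons cat_rcons big_rev size_rev; apply.
Qed.

Lemma mean_le_allrel (a b : seq R) : allrel geR a b ->
  (size a)%:R * \sum_(y <- b) y <= (size b)%:R * \sum_(x <- a) x.
Proof.
move=> /allrelP ab; rewrite -sumr_const_seq mulr_sumr.
rewrite big_seq [X in _ <= X]big_seq; apply: ler_sum => x xa; rewrite -sumr_const_seq.
by rewrite big_seq [X in _ <= X]big_seq; apply: ler_sum => y yb; apply: ab.
Qed.

Lemma balanced_gaps_before C L : sorted geR L -> balanced_seq C L -> gaps_before C L.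
Proof.
move=> sL /balanced_seqP bal h t n s' E.
have [->|t_nil] := eqVneq t [::]; first by rewrite big_nil mul0r.
set i := size (h ++ t).
have t_pos : (0 < size t)%N by rewrite lt0n size_eq0.
have iL : (0 < i < size L)%N by rewrite E catA size_cat /= /i size_cat; lia.
have := bal i iL; rewrite E catA take_size_cat // nth_cat ltnn subnn /= big_cat /=.
have ht : allrel geR h t.
  move: sL; rewrite (sorted_pairwise geR_trans) E catA !pairwise_cat.
  by case/and3P=> _ /and3P [].
set A := \sum_(y <- h) (y - n); set B := \sum_(y <- t) (y - n).
have mean : (size h)%:R * B <= (size t)%:R * A.
  have := @mean_le_allrel (map (fun y => y - n) h) (map (fun y => y - n) t).
  rewrite !size_map !big_map allrel_mapl allrel_mapr; apply.
  by apply: sub_all ht => y /allP yt; apply/allP => z /yt /=; rewrite lerD2r.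
rewrite /i size_cat natrD => sumAB.
have b_gt0 : 0 < (size t)%:R :> R by rewrite ltr0n.
have a_ge0 : 0 <= (size h)%:R :> R by rewrite ler0n.
rewrite -(ler_pM2l (ltr_wpDl a_ge0 b_gt0)); nra.
Qed.

Lemma gaps_before_excess C L x : sorted geR L -> gaps_before C L ->
  has (fun y => y <= x) L -> excess x L <= (nabove x L)%:R * C.
Proof.
move=> sL gaps /has_split_first [h [n [t [E nx /all_gt_predC hx]]]].
have tn : all (fun y => y <= n) t.
  by move: sL; rewrite (sorted_pairwise geR_trans) E pairwise_cat => /and3P [_ _ /andP []].
have tx : all (fun y => y <= x) (n :: t).
  by rewrite /= nx; apply: sub_all tn => y /le_trans; apply.
rewrite E excess_cat nabove_cat (excess_le tx) (nabove_le tx) addr0 addn0.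
rewrite (excess_gt hx) (nabove_gt hx).
apply: le_trans (gaps [::] h n t E).
by apply: ler_sum => y _; rewrite lerD2l lerN2.
Qed.

(* Relative position of two pairs (length in D1, length in D2) of a greedy series
   composition: the longest path of Q is matched with the shortest of R. *)
Definition crossing (a b : R * R) := (b.1 <= a.1) && (a.2 <= b.2).

Lemma sum_run_before C x h z zs :
  pairwise crossing (h ++ z :: zs) -> gaps_before C (map fst (h ++ z :: zs)) ->
  psum z <= x -> \sum_(y <- h) (psum y - x) <= (size h)%:R * C.
Proof.
rewrite pairwise_cat => /and3P [/allrelP cross _ _] gaps zx.
have := gaps [::] (map fst h) z.1 (map fst zs); rewrite map_cat size_map big_map => /(_ erefl).
apply: le_trans; rewrite big_seq [X in _ <= X]big_seq; apply: ler_sum => y yh.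
by have /andP [] := cross y z yh (mem_head _ _); lra.
Qed.

Lemma sum_run_after C x z zs :
  pairwise crossing (z :: zs) -> gaps_after C (map snd (z :: zs)) ->
  psum z <= x -> \sum_(y <- zs) (psum y - x) <= (size zs)%:R * C.
Proof.
move=> /= /andP [/allP cross _] gaps zx.
have := gaps [::] z.2 (map snd zs); rewrite size_map big_map => /(_ erefl).
apply: le_trans; rewrite big_seq [X in _ <= X]big_seq; apply: ler_sum => y yzs.
by have /andP [] := cross y yzs; lra.
Qed.

Lemma excess_crossing_sums C x zs :
  pairwise crossing zs -> gaps_before C (map fst zs) -> gaps_after C (map snd zs) ->
  has (fun z => psum z <= x) zs ->
  excess x (map psum zs) <= (nabove x (map psum zs))%:R * C.
Proof.
(* Induction on the list, carrying the pending run [h] of pairs above the threshold. *)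
pose bound ys := excess x (map psum ys) <= (nabove x (map psum ys))%:R * C.
suff gen h : all (fun z => x < psum z) h -> pairwise crossing (h ++ zs) ->
    gaps_before C (map fst (h ++ zs)) -> gaps_after C (map snd (h ++ zs)) ->
    has (fun z => psum z <= x) zs -> bound (h ++ zs) by exact: (gen [::]).
elim: zs h => [|z zs IH] h // hx cross gaps_fst gaps_snd low.
have [zx|xz] := leP (psum z) x; last first.
  have := IH (rcons h z); rewrite cat_rcons all_rcons xz; apply=> //.
  by move: low; rewrite /= leNgt xz.
have hx' : all (fun y => x < y) (map psum h) by rewrite all_map.
rewrite /bound map_cat excess_cat nabove_cat (excess_gt hx').
rewrite (nabove_gt hx') size_map big_map natrD mulrDl.
apply: lerD; first exact: sum_run_before cross gaps_fst zx.
have {}cross : pairwise crossing (z :: zs) by move: cross; rewrite pairwise_cat => /and3P [].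
rewrite map_cat in gaps_fst; rewrite map_cat in gaps_snd.
have {}gaps_fst := gaps_before_drop gaps_fst.
have {}gaps_snd := gaps_after_drop gaps_snd.
have -> : map psum (z :: zs) = [:: psum z] ++ map psum zs by [].
have zx' : all (fun y => y <= x) [:: psum z] by rewrite /= zx.
rewrite excess_cat nabove_cat (excess_le zx') (nabove_le zx') add0r add0n.
have [lowzs|/hasPn highzs] := boolP (has (fun z => psum z <= x) zs).
  apply: (IH [::]) => //.
  - by move: cross => /andP [].
  - exact: gaps_before_drop [:: z.1] _.
  - exact: gaps_after_drop [:: z.2] _.
have zsx : all (fun y => x < y) (map psum zs).
  by rewrite all_map; apply/allP => y /highzs /=; rewrite ltNge.
rewrite (excess_gt zsx) (nabove_gt zsx) size_map big_map.
exact: sum_run_after cross gaps_snd zx.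
Qed.
End Excess.

Section SeriesParallelGraphs.
Local Open Scope nat_scope.

Lemma mem_build T s t fr off a : a \in build T s t fr off ->
  [/\ off <= arc_id a < off + nleaves T,
      arc_tail a = s \/ fr <= arc_tail a < fr + nser T &
      arc_head a = t \/ fr <= arc_head a < fr + nser T].
Proof.
elim: T s t fr off => [|l IHl r IHr|l IHl r IHr] s t fr off /=.
- by rewrite inE => /eqP -> /=; split; [lia|left|left].
- by rewrite mem_cat => /orP [/IHl|/IHr] [? ? ?]; split; lia.
- by rewrite mem_cat => /orP [/IHl|/IHr] [? ? ?]; split; lia.
Qed.

Definition node_bounds T (G : spg) :=
  [/\ sp_src G < sp_fr G, sp_snk G < sp_fr G, sp_src G != sp_snk G, 2 <= sp_fr G
    & sp_off G + nleaves (sp_tree G) <= nleaves T].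

Lemma is_node_bounds T G : is_node (whole T) G -> node_bounds T G.
Proof.
elim=> [|{}G _ [H1 H2 /eqP H3 H4 H5] Hnl|{}G _ [H1 H2 /eqP H3 H4 H5] Hnl];
  first by split=> //; lia.
all: case: G H1 H2 H3 H4 H5 Hnl => [[|l r|l r] s t fr off] //= *.
all: by rewrite /node_bounds /=; split=> //; try lia; apply/eqP; lia.
Qed.

Definition inner (G : spg) (v : nat) := sp_fr G <= v < sp_fr G + nser (sp_tree G).

Lemma arcs_inner T G c : is_node (whole T) G -> c \in arcs (whole T) ->
  inner G (arc_tail c) || inner G (arc_head c) -> c \in arcs G.
Proof.
move=> HG cD; elim: HG => [//|{}G HG IH Hnl|{}G HG IH Hnl];
  have [H1 H2 /eqP H3 H4 H5] := is_node_bounds HG;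
  case: G HG IH Hnl H1 H2 H3 H4 H5 => [[|l r|l r] s t fr off] //= HG IH _ H1 H2 H3 H4 H5 Hc;
  (have := IH; rewrite /inner /= in Hc *; move=> /(_ ltac:(lia)));
  rewrite /arcs /= mem_cat => /orP [] // /mem_build [_ Ht Hh]; lia.
Qed.

Definition adjacent (a b : sparc) := arc_head a == arc_tail b.

Lemma adjacent_exit_forward (A : seq sparc) (Inside Outside : pred sparc) (X : pred nat)
    v a p :
  (forall c, c \in A -> X (arc_tail c) -> Inside c || Outside c) ->
  (forall c, Inside c -> X (arc_head c)) -> ~~ X v ->
  path adjacent a p -> all (fun b => b \in A) p ->
  arc_head (last a p) = v -> has Inside (a :: p) -> has Outside (a :: p).
Proof.
move=> leaveX enterX Xv; elim: p a => [|b p IH] a.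
  by move=> _ _ /= av; rewrite orbF => /enterX; rewrite av (negbTE Xv).
move=> /andP [/eqP ab bp] /andP [bA pA] last_v /orP [Ina|Inp]; apply/orP; right.
  have := enterX a Ina; rewrite ab => /(leaveX b bA) /orP [Inb|Outb].
    by apply: IH => //; rewrite /= Inb.
  by rewrite /= Outb.
exact: IH.
Qed.

Lemma adjacent_exit_backward (A : seq sparc) (Inside Outside : pred sparc) (X : pred nat)
    u a p :
  (forall c, c \in A -> X (arc_head c) -> Inside c || Outside c) ->
  (forall c, Inside c -> X (arc_tail c)) -> ~~ X u ->
  path adjacent a p -> all (fun b => b \in A) (a :: p) ->
  arc_tail a = u -> has Inside (a :: p) -> has Outside (a :: p).
Proof.
move=> enterX leaveX Xu.
suff H b q : path adjacent b q -> all (fun b => b \in A) (b :: q) ->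
    has Inside (b :: q) -> has Outside (b :: q) || Inside b.
  move=> ap pA au /(H a p ap pA) /orP [//|/leaveX].
  by rewrite au (negbTE Xu).
elim: q b => [|c q IH] b; first by move=> _ _ /=; rewrite !orbF => ->; rewrite orbT.
move=> /andP [/eqP bc cq] /andP [bA cqA] /orP [Inb|Inq]; first by rewrite Inb orbT.
have /orP [Outq|Inc] := IH c cq cqA Inq; first by rewrite -cat1s has_cat Outq orbT.
have := leaveX c Inc; rewrite -bc => /(enterX b bA) /orP [->|Outb].
  by rewrite orbT.
by rewrite /= Outb.
Qed.

Lemma map_tail_belast a p : path adjacent a p ->
  map arc_tail (a :: p) = belast (arc_tail a) (map arc_head (a :: p)).
Proof.
elim: p a => [|b p IH] a //= /andP [/eqP ab bp].
by have /= -> := IH b bp; rewrite ab.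
Qed.

Lemma is_path_uniq_tails A u v p : is_path A u v p -> uniq (map arc_tail p).
Proof.
case: p => [//|a p] /and5P [/eqP au _ ap _ uniq_heads].
by rewrite (map_tail_belast ap) au; move: uniq_heads; rewrite lastI rcons_uniq => /andP [].
Qed.

Lemma is_path_uniq A u v p : is_path A u v p -> uniq p.
Proof. by move=> /is_path_uniq_tails /map_uniq. Qed.

Lemma is_path_arcs A u v p : is_path A u v p -> all (fun b => b \in A) p.
Proof. by case: p => [//|a p] /and5P []. Qed.

Lemma is_path_sub A B u v p : {subset A <= B} -> is_path A u v p -> is_path B u v p.
Proof.
move=> AB; case: p => [//|a p] /and5P [au pv ap pA p_uniq].
rewrite /is_path au pv ap p_uniq /= andbT.
by apply: sub_all pA => b /AB.
Qed.

Lemma is_path_cat A B u w v q r : is_path A u w q -> is_path B w v r ->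
  (forall x, x \in u :: map arc_head q -> x \in map arc_head r -> False) ->
  is_path (A ++ B) u v (q ++ r).
Proof.
case: q => [//|a q]; case: r => [//|b r].
move=> /and5P [au qw aq qA q_uniq] /and5P [bw rv br rB r_uniq] disj.
rewrite cat_cons /is_path; apply/and5P; split.
- exact: au.
- by rewrite last_cat.
- by rewrite cat_path /= aq (eqP qw) (eqP bw) eqxx br.
- rewrite -cat_cons all_cat; apply/andP; split.
  + by apply: sub_all qA => c; rewrite mem_cat => ->.
  + by apply: sub_all rB => c; rewrite mem_cat => ->; rewrite orbT.
rewrite -cat_cons map_cat -cat_cons cat_uniq q_uniq.
have r_heads_uniq : uniq (map arc_head (b :: r)) by case/andP: r_uniq.
rewrite r_heads_uniq andbT.
by apply/hasPn => x xr; apply/negP => xq; apply: disj xq xr.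
Qed.

Lemma uniq_map_inj_in (T1 T2 : eqType) (f : T1 -> T2) (s : seq T1) :
  uniq (map f s) -> {in s &, injective f}.
Proof.
elim: s => [//|z s IH] /= /andP [fz fs] x y; rewrite !inE.
move=> /orP [/eqP ->|xs] /orP [/eqP ->|ys] // E.
- by move: fz; rewrite E map_f.
- by move: fz; rewrite -E map_f.
- exact: IH.
Qed.

Lemma path_enters_at_src T G p : is_node (whole T) G ->
  is_path (arcs (whole T)) 0 1 p -> uses G p ->
  exists2 c, c \in p & (c \in arcs G) && (arc_tail c == sp_src G).
Proof.
move=> HG; have [? ? ? ? ?] := is_node_bounds HG.
case: p => [//|a p] Dp; have /and5P [a0 _ ap pA _] := Dp.
move=> /hasP [c cp cG]; have [c_src|c_src] := eqVneq (arc_tail c) (sp_src G).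
  by exists c => //; rewrite cG c_src eqxx.
suff /hasP [d dp Hd] : has (fun c => (c \in arcs G) && (arc_tail c == sp_src G)) (a :: p).
  by exists d.
apply: (@adjacent_exit_backward (arcs (whole T))
  (fun c => (c \in arcs G) && (arc_tail c != sp_src G)) _ (inner G) 0) => //.
- move=> d dD Hd; rewrite (arcs_inner HG dD) ?Hd ?orbT //=.
  by case: (arc_tail d == sp_src G).
- move=> d /andP [/mem_build [_ [d_src|] _] d_nsrc] //.
  by move: d_nsrc; rewrite d_src eqxx.
- by rewrite /inner; lia.
- exact/eqP.
- by apply/hasP; exists c; rewrite ?cG ?c_src.
Qed.

Lemma arcs_children G : ~~ is_leaf G -> arcs G = arcs (lchild G) ++ arcs (rchild G).
Proof. by case: G => [[|l r|l r] s t fr off]. Qed.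

Lemma arcs_children_disjoint G : ~~ is_leaf G -> forall a,
  a \in arcs (lchild G) -> a \in arcs (rchild G) -> False.
Proof.
case: G => [[|l r|l r] s t fr off] //= _ a;
  by rewrite /arcs /= => /mem_build [? _ _] /mem_build [? _ _]; lia.
Qed.

Lemma par_uses_not_both T l r s t fr off :
  let G := SPG (Par l r) s t fr off in
  is_node (whole T) G -> forall p, is_path (arcs (whole T)) 0 1 p ->
  ~~ (uses (lchild G) p && uses (rchild G) p).
Proof.
(* Each child would be entered by an arc leaving the common source: two arcs of the path
   with the same tail. *)
move=> G HG p Dp; apply/negP => /andP [use1 use2].
have [c1 c1p /andP [c1G /eqP c1s]] := path_enters_at_src (node_l HG isT) Dp use1.
have [c2 c2p /andP [c2G /eqP c2s]] := path_enters_at_src (node_r HG isT) Dp use2.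
have c12 := uniq_map_inj_in (is_path_uniq_tails Dp) c1p c2p (etrans c1s (esym c2s)).
by apply: (@arcs_children_disjoint G isT c1) => //; rewrite c12.
Qed.

Lemma ser_uses_eq T l r s t fr off :
  let G := SPG (Ser l r) s t fr off in
  is_node (whole T) G -> forall p, is_path (arcs (whole T)) 0 1 p ->
  uses (lchild G) p = uses (rchild G) p.
Proof.
(* Arcs at the inner vertices of G all belong to G, so a path of D that enters the left
   child must leave it through the middle vertex, into the right child, and vice versa. *)
move=> G HG p; have [/= H1 H2 /eqP H3 H4 H5] := is_node_bounds HG.
case: p => [//|a p] Dp; have /and5P [a0 a1 ap /andP [aD pD] _] := Dp.
have to_child c : c \in arcs (whole T) -> inner G (arc_tail c) || inner G (arc_head c) ->
    (c \in arcs (lchild G)) || (c \in arcs (rchild G)).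
  by move=> cD Hc; rewrite -mem_cat -arcs_children //; apply: arcs_inner HG cD Hc.
apply/idP/idP => use.
- apply: (@adjacent_exit_forward (arcs (whole T)) _ _ (inner G) 1) => //.
  + by move=> c cD Hc; apply: to_child => //; rewrite Hc.
  + by move=> c /mem_build /= [_ _ Hh]; rewrite /inner /=; lia.
  + by rewrite /inner /=; lia.
  + exact/eqP.
  + exact: use.
- apply: (@adjacent_exit_backward (arcs (whole T)) _ _ (inner G) 0) => //.
  + by move=> c cD Hc; rewrite orbC; apply: to_child => //; rewrite Hc orbT.
  + by move=> c /mem_build /= [_ Ht _]; rewrite /inner /=; lia.
  + by rewrite /inner /=; lia.
  + by rewrite /= aD.
  + exact/eqP.
  + exact: use.
Qed.

Lemma ser_children_vertex_disjoint T l r s t fr off :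
  let G := SPG (Ser l r) s t fr off in
  is_node (whole T) G -> forall q p x,
  is_path (arcs (lchild G)) s fr q -> is_path (arcs (rchild G)) fr t p ->
  x \in s :: map arc_head q -> x \in map arc_head p -> False.
Proof.
move=> G HG q p x Hq Hp xq xp; have [/= H1 H2 /eqP H3 H4 H5] := is_node_bounds HG.
have /eqP x_fr : x != fr.
  case: p Hp xp => [//|b p] /and5P [_ _ _ _ /= /andP [fr_p _]] xp.
  by apply: contraNneq fr_p => <-.
move: xp x_fr xq => /mapP [c cp ->] c_fr.
have /allP /(_ c cp) /mem_build /= [_ _ Hc] := is_path_arcs Hp.
rewrite in_cons => /orP [/eqP|/mapP [d dq]] c_d; first by lia.
have /allP /(_ d dq) /mem_build /= [_ _ Hd] := is_path_arcs Hq; lia.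
Qed.
End SeriesParallelGraphs.

Section Lengths.
Variables (R : realFieldType) (tau : nat -> R).
Implicit Types (G : spg) (p q : seq sparc) (P Ps : seq (seq sparc)).

Lemma tauP_cat G p q : tauP tau G (p ++ q) = tauP tau G p + tauP tau G q.
Proof. by rewrite /tauP big_cat. Qed.

Lemma tauP_unused G p : ~~ uses G p -> tauP tau G p = 0.
Proof.
by move=> /hasPn unused; rewrite /tauP big_seq_cond big1 // => a /andP [/unused /negbTE ->].
Qed.

Lemma tauP_ge0 G p : (forall a, a \in arcs G -> 0 <= tau (arc_id a)) -> 0 <= tauP tau G p.
Proof. by move=> tau_ge0; apply: sumr_ge0 => a /tau_ge0. Qed.

Lemma Cmax_ge0 G Ps : 0 <= Cmax tau G Ps.
Proof. exact: bigmax_ge_id. Qed.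

Lemma Cmax_le G G' Ps : (forall p, tauP tau G p <= tauP tau G' p) ->
  Cmax tau G Ps <= Cmax tau G' Ps.
Proof.
move=> le_GG'; rewrite {1}/Cmax big_seq_cond; apply: bigmax_le => [|p /andP [pPs _]].
  exact: Cmax_ge0.
by apply: le_trans (le_GG' p) _; apply: le_bigmax_seq.
Qed.

Lemma theta_le_Cmax G Ps : theta tau G Ps <= (count (uses G) Ps)%:R * Cmax tau G Ps.
Proof.
rewrite /theta (bigID (uses G)) /= [X in _ + X]big1 ?addr0; last by move=> p /tauP_unused.
have -> : (count (uses G) Ps)%:R * Cmax tau G Ps = \sum_(p <- Ps | uses G p) Cmax tau G Ps.
  by rewrite big_const_seq iter_addr_0 mulr_natl.
rewrite big_seq_cond [X in _ <= X]big_seq_cond.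
by apply: ler_sum => p /andP [pPs _]; apply: le_bigmax_seq.
Qed.

Lemma profile_count_uses G P : profile G P -> count (uses G) P = size P.
Proof.
move=> /andP [/allP paths _]; apply/eqP; rewrite -all_count; apply/allP => p pP.
have := paths p pP; case: p {pP} => [//|a p] /and5P [_ _ _ /= /andP [aG _] _].
by rewrite /uses /= aG.
Qed.

Lemma consistent_size_eq G1 G2 Ps Q Rr : {in Ps, uses G1 =1 uses G2} ->
  profile G1 Q -> profile G2 Rr -> consistent tau G1 Ps Q -> consistent tau G2 Ps Rr ->
  size Q = size Rr.
Proof.
move=> same_uses HQ HR [count1 _] [count2 _].
by rewrite -(profile_count_uses HQ) -(profile_count_uses HR) count1 count2; apply: eq_in_count.
Qed.

Lemma sorted_lengths_profile G P : profile G P ->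
  sorted_lengths tau G P = sort geR (map (tauP tau G) P).
Proof.
move=> HP; rewrite /sorted_lengths; congr (sort _ (map _ _)).
by apply/all_filterP; rewrite all_count profile_count_uses.
Qed.

Lemma balanced_gaps_before_profile G Ps P L : profile G P -> balanced tau G Ps P ->
  sorted geR L -> perm_eq L (map (tauP tau G) P) -> gaps_before (Cmax tau G Ps) L.
Proof.
move=> HP bal sL LP; apply: balanced_gaps_before (sL) _.
suff <- : sorted_lengths tau G P = L by [].
rewrite sorted_lengths_profile // -(sorted_sort (@geR_trans R) sL).
by apply/(perm_sortP (@geR_total R) (@geR_trans R) (@geR_anti R)); rewrite perm_sym.
Qed.

Lemma excess_consistent_balanced G Ps Q C x :
  profile G Q -> consistent tau G Ps Q -> balanced tau G Ps Q ->
  Cmax tau G Ps <= C -> 0 <= x ->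
  excess x (map (tauP tau G) Q) <= (nabove x (map (tauP tau G) Q))%:R * C.
Proof.
move=> HQ [count_eq theta_le] bal CmaxC x_ge0; set qs := map (tauP tau G) Q.
have le_C n : n%:R * Cmax tau G Ps <= n%:R * C by apply: ler_wpM2l.
have [low|/hasPn high] := boolP (has (fun y => y <= x) qs).
  pose L := sort geR qs; have Lqs : perm_eq L qs by rewrite perm_sort.
  have qsL : perm_eq qs L by rewrite perm_sym.
  have sL : sorted geR L by apply: sort_sorted (@geR_total R) _.
  have gaps := balanced_gaps_before_profile HQ bal sL Lqs.
  rewrite (excess_perm x qsL) (nabove_perm x qsL); apply: le_trans (le_C _).
  by apply: (gaps_before_excess sL gaps); rewrite (perm_has _ Lqs).
have qsx : all (fun y => x < y) qs by apply/allP => y /high; rewrite ltNge.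
have sum_le_theta : \sum_(y <- qs) (y - x) <= theta tau G Q.
  rewrite /theta -(big_map (tauP tau G) xpredT idfun) -/qs.
  by apply: ler_sum => y _; rewrite lerBlDr lerDl.
rewrite (excess_gt qsx) (nabove_gt qsx) size_map -(profile_count_uses HQ) count_eq.
apply: le_trans sum_le_theta _; apply: le_trans theta_le _.
exact: le_trans (theta_le_Cmax G Ps) (le_C _).
Qed.
End Lengths.

Lemma uniq_flatten_pairwise (P : seq (seq sparc)) :
  uniq (flatten P) -> pairwise (fun p q => ~~ has (fun a => a \in q) p) P.
Proof.
elim: P => [//|p P IH] /=; rewrite cat_uniq => /and3P [_ disj uniqP].
rewrite IH // andbT; apply/allP => q qP; apply/hasPn => a ap; apply/negP => aq.
have aP : a \in flatten P by apply/flattenP; exists q.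
by move/hasPn: disj => /(_ a aP); rewrite ap.
Qed.

Lemma profileE G P : profile G P =
  all (is_path (arcs G) (sp_src G) (sp_snk G)) P && uniq (flatten P).
Proof.
rewrite /profile; have [/= paths|//] := boolP (all _ P); apply/idP/idP; last first.
  exact: uniq_flatten_pairwise.
elim: P paths => [//|p P IH] /= /andP [pG paths] /andP [disj pairs].
rewrite cat_uniq (is_path_uniq pG) IH // andbT.
apply/hasPn => a /flattenP [q qP aq]; apply/negP => ap.
by move/allP: disj => /(_ q qP) /hasPn /(_ a ap); rewrite aq.
Qed.

Lemma mem_flatten_profile G P a : profile G P -> a \in flatten P -> a \in arcs G.
Proof.
move=> /andP [/allP paths _] /flattenP [p pP ap].
by have /allP := is_path_arcs (paths p pP); apply.
Qed.

Lemma perm_flatten_zip (T : eqType) (s t : seq (seq T)) : size s = size t ->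
  perm_eq (flatten [seq x.1 ++ x.2 | x <- zip s t]) (flatten s ++ flatten t).
Proof.
elim: s t => [|p s IH] [|q t] //= [/IH st].
by rewrite -!catA perm_cat2l perm_sym perm_catCA perm_sym perm_cat2l.
Qed.

Lemma mem_zip_pair (S T : eqType) (s : seq S) (t : seq T) x y :
  (x, y) \in zip s t -> x \in s /\ y \in t.
Proof.
elim: s t => [|a s IH] [|b t] //=; rewrite inE => /orP [/eqP [-> ->]|/IH [xs yt]].
  by split; apply: mem_head.
by rewrite !in_cons xs yt !orbT.
Qed.

Lemma pairwise_zip (A B : Type) (r1 : rel A) (r2 : rel B) s t :
  pairwise r1 s -> pairwise r2 t ->
  pairwise (fun a b => r1 a.1 b.1 && r2 a.2 b.2) (zip s t).
Proof.
elim: s t => [|a s IH] [|b t] //= /andP [a_s s_pw] /andP [b_t t_pw]; rewrite IH // andbT.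
elim: s t {IH s_pw t_pw} a_s b_t => [|a' s IH] [|b' t] //= /andP [-> a_s] /andP [-> b_t].
exact: IH.
Qed.

Definition greedy_series (R : realFieldType) (tau : nat -> R) (G1 G2 : spg)
    (Q Rr P : seq (seq sparc)) :=
  size Q = size Rr /\
  exists Q' R', [/\ perm_eq Q Q', perm_eq Rr R',
    sorted (fun p q => tauP tau G1 q <= tauP tau G1 p) Q',
    sorted (fun p q => tauP tau G2 p <= tauP tau G2 q) R' &
    P = [seq x.1 ++ x.2 | x <- zip Q' R']].

Lemma greedy_series_exists (R : realFieldType) (tau : nat -> R) G1 G2 Q Rr :
  size Q = size Rr -> exists P, greedy_series tau G1 G2 Q Rr P.
Proof.
set le1 := fun p q => tauP tau G1 q <= tauP tau G1 p.
set le2 := fun p q => tauP tau G2 p <= tauP tau G2 q.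
have le1_total : total le1 by move=> p q; apply: le_total.
have le2_total : total le2 by move=> p q; apply: le_total.
move=> QR; exists [seq x.1 ++ x.2 | x <- zip (sort le1 Q) (sort le2 Rr)]; split=> //.
exists (sort le1 Q), (sort le2 Rr); split=> //; rewrite ?sort_sorted //.
  by rewrite perm_sym perm_sort.
by rewrite perm_sym perm_sort.
Qed.

Lemma profile_is_path G P p : profile G P -> p \in P ->
  is_path (arcs G) (sp_src G) (sp_snk G) p.
Proof. by move=> /andP [/allP paths _] /paths. Qed.

Section Composition.
Variables (R : realFieldType) (tau : nat -> R) (D G1 G2 : spg).
Hypothesis arcsD : arcs D = arcs G1 ++ arcs G2.
Hypothesis arcs12 : forall a, a \in arcs G1 -> a \in arcs G2 -> False.
Hypothesis tau_ge0 : forall a, a \in arcs D -> 0 <= tau (arc_id a).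
Implicit Types (p q : seq sparc) (P Ps Q Rr : seq (seq sparc)).

Lemma tauP_split p : tauP tau D p = tauP tau G1 p + tauP tau G2 p.
Proof.
rewrite /tauP !(big_mkcond (fun a => a \in _)) -big_split; apply: eq_bigr => a _.
rewrite arcsD mem_cat.
case a1: (a \in arcs G1); case a2: (a \in arcs G2); rewrite /= ?addr0 ?add0r //.
by case: (arcs12 a1 a2).
Qed.

Lemma uses_split p : uses D p = uses G1 p || uses G2 p.
Proof. by rewrite /uses -has_predU; apply: eq_has => a; rewrite /= arcsD mem_cat. Qed.

Lemma theta_split P : theta tau D P = theta tau G1 P + theta tau G2 P.
Proof. by rewrite /theta -big_split; apply: eq_bigr => p _; apply: tauP_split. Qed.

Lemma tauP_left Q q : profile G1 Q -> q \in Q -> tauP tau D q = tauP tau G1 q.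
Proof.
move=> HQ /(profile_is_path HQ) /is_path_arcs /allP qG1.
rewrite tauP_split (@tauP_unused _ _ G2) ?addr0 //; apply/hasPn => a /qG1 aG1.
by apply/negP => /(arcs12 aG1).
Qed.

Lemma tauP_right Rr r : profile G2 Rr -> r \in Rr -> tauP tau D r = tauP tau G2 r.
Proof.
move=> HR /(profile_is_path HR) /is_path_arcs /allP rG2.
rewrite tauP_split (@tauP_unused _ _ G1) ?add0r //; apply/hasPn => a /rG2 aG2.
by apply/negP => /arcs12 /(_ aG2).
Qed.

Lemma Cmax_left_le Ps : Cmax tau G1 Ps <= Cmax tau D Ps.
Proof.
apply: Cmax_le => p; rewrite tauP_split lerDl; apply: tauP_ge0 => a aG2.
by apply: tau_ge0; rewrite arcsD mem_cat aG2 orbT.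
Qed.

Lemma Cmax_right_le Ps : Cmax tau G2 Ps <= Cmax tau D Ps.
Proof.
apply: Cmax_le => p; rewrite tauP_split lerDr; apply: tauP_ge0 => a aG1.
by apply: tau_ge0; rewrite arcsD mem_cat aG1.
Qed.

Lemma uniq_flatten_children Q Rr : profile G1 Q -> profile G2 Rr ->
  uniq (flatten Q ++ flatten Rr).
Proof.
move=> HQ HR; rewrite cat_uniq.
move: (HQ) (HR); rewrite !profileE => /andP [_ ->] /andP [_ ->]; rewrite andbT /=.
apply/hasPn => a aRr; apply/negP => aQ.
exact: arcs12 (mem_flatten_profile HQ aQ) (mem_flatten_profile HR aRr).
Qed.

Lemma tauP_zip_concat Q Rr Q' R' : profile G1 Q -> profile G2 Rr ->
  perm_eq Q Q' -> perm_eq Rr R' ->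
  {in zip Q' R', forall x, tauP tau D (x.1 ++ x.2) = tauP tau G1 x.1 + tauP tau G2 x.2}.
Proof.
move=> HQ HR QQ' RR' [q r] /mem_zip_pair [qQ' rR'].
by rewrite tauP_cat (tauP_left HQ) ?(perm_mem QQ') // (tauP_right HR) ?(perm_mem RR').
Qed.

Lemma map_tauP_cat Q Rr : profile G1 Q -> profile G2 Rr ->
  map (tauP tau D) (Q ++ Rr) = map (tauP tau G1) Q ++ map (tauP tau G2) Rr.
Proof.
move=> HQ HR; rewrite map_cat; congr (_ ++ _); apply/eq_in_map => p.
  exact: tauP_left.
exact: tauP_right.
Qed.

Section Parallel.
Hypotheses (src1 : sp_src G1 = sp_src D) (snk1 : sp_snk G1 = sp_snk D)
  (src2 : sp_src G2 = sp_src D) (snk2 : sp_snk G2 = sp_snk D).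

Lemma profile_par Q Rr : profile G1 Q -> profile G2 Rr -> profile D (Q ++ Rr).
Proof.
move=> HQ HR; rewrite profileE flatten_cat uniq_flatten_children // andbT all_cat.
move: HQ HR; rewrite !profileE => /andP [paths1 _] /andP [paths2 _]; apply/andP; split.
- apply: sub_all paths1 => q; rewrite -src1 -snk1.
  by apply: is_path_sub => a; rewrite arcsD mem_cat => ->.
- apply: sub_all paths2 => r; rewrite -src2 -snk2.
  by apply: is_path_sub => a; rewrite arcsD mem_cat => ->; rewrite orbT.
Qed.

Lemma consistent_par Ps Q Rr : (forall p, p \in Ps -> ~~ (uses G1 p && uses G2 p)) ->
  profile G1 Q -> profile G2 Rr -> consistent tau G1 Ps Q -> consistent tau G2 Ps Rr ->
  consistent tau D Ps (Q ++ Rr).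
Proof.
move=> not_both HQ HR [count1 theta1] [count2 theta2]; split.
  rewrite (profile_count_uses (profile_par HQ HR)) size_cat -(profile_count_uses HQ).
  rewrite -(profile_count_uses HR) count1 count2 -count_predUI.
  rewrite (@eq_in_count _ (predI _ _) pred0) ?count_pred0 ?addn0; last first.
    by move=> p /not_both /negbTE.
  by apply: eq_count => p; rewrite /= uses_split.
rewrite [theta tau D Ps]theta_split.
suff -> : theta tau D (Q ++ Rr) = theta tau G1 Q + theta tau G2 Rr by exact: lerD.
rewrite /theta big_cat; congr (_ + _); rewrite big_seq [RHS]big_seq; apply: eq_bigr => p.
  exact: tauP_left.
exact: tauP_right.
Qed.

Lemma balanced_par Ps Q Rr : profile G1 Q -> profile G2 Rr ->
  consistent tau G1 Ps Q -> consistent tau G2 Ps Rr ->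
  balanced tau G1 Ps Q -> balanced tau G2 Ps Rr -> balanced tau D Ps (Q ++ Rr).
Proof.
move=> HQ HR cQ cR bQ bR.
rewrite /balanced (sorted_lengths_profile _ (profile_par HQ HR)).
apply: balanced_sort_of_excess; first exact: Cmax_ge0.
move=> x /hasP [_ /mapP [p _ ->] px]; have x_ge0 := le_trans (tauP_ge0 p tau_ge0) px.
rewrite map_tauP_cat // excess_cat nabove_cat natrD mulrDl; apply: lerD.
  exact: excess_consistent_balanced HQ cQ bQ (Cmax_left_le Ps) x_ge0.
exact: excess_consistent_balanced HR cR bR (Cmax_right_le Ps) x_ge0.
Qed.

Lemma parallel_composition_sound Ps Q Rr :
  (forall p, p \in Ps -> ~~ (uses G1 p && uses G2 p)) ->
  profile G1 Q -> profile G2 Rr -> consistent tau G1 Ps Q -> consistent tau G2 Ps Rr ->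
  balanced tau G1 Ps Q -> balanced tau G2 Ps Rr ->
  [/\ profile D (Q ++ Rr), consistent tau D Ps (Q ++ Rr) & balanced tau D Ps (Q ++ Rr)].
Proof.
move=> not_both HQ HR cQ cR bQ bR; split; first exact: profile_par.
  exact: consistent_par.
exact: balanced_par.
Qed.
End Parallel.

Section Series.
Hypotheses (src1 : sp_src G1 = sp_src D) (mid : sp_snk G1 = sp_src G2)
  (snk2 : sp_snk G2 = sp_snk D).
Hypothesis vertex12 : forall q r x,
  is_path (arcs G1) (sp_src G1) (sp_snk G1) q -> is_path (arcs G2) (sp_src G2) (sp_snk G2) r ->
  x \in sp_src G1 :: map arc_head q -> x \in map arc_head r -> False.

Lemma profile_series Q Rr P : profile G1 Q -> profile G2 Rr ->
  greedy_series tau G1 G2 Q Rr P -> profile D P.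
Proof.
move=> HQ HR [QR [Q' [R' [QQ' RR' _ _ ->]]]].
have sizeQR' : size Q' = size R' by rewrite -(perm_size QQ') -(perm_size RR').
rewrite profileE (perm_uniq (perm_flatten_zip sizeQR')).
rewrite -(perm_uniq (perm_cat (perm_flatten QQ') (perm_flatten RR'))).
rewrite uniq_flatten_children // andbT.
apply/allP => _ /mapP [[q r] /mem_zip_pair [qQ' rR'] ->] /=.
have pq := profile_is_path HQ (etrans (perm_mem QQ' q) qQ').
have pr := profile_is_path HR (etrans (perm_mem RR' r) rR').
have pr' : is_path (arcs G2) (sp_snk G1) (sp_snk G2) r by rewrite mid.
by rewrite arcsD -src1 -snk2; apply: (is_path_cat pq pr') => x; apply: vertex12 pq pr.
Qed.

Lemma consistent_series Ps Q Rr P : {in Ps, uses G1 =1 uses G2} ->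
  profile G1 Q -> profile G2 Rr -> consistent tau G1 Ps Q -> consistent tau G2 Ps Rr ->
  greedy_series tau G1 G2 Q Rr P -> consistent tau D Ps P.
Proof.
move=> same_uses HQ HR [count1 theta1] [count2 theta2] gP.
have HP := profile_series HQ HR gP; move: gP => [QR [Q' [R' [QQ' RR' _ _ EP]]]].
have sizeQR' : size Q' = size R' by rewrite -(perm_size QQ') -(perm_size RR').
split.
  rewrite (profile_count_uses HP) EP size_map size_zip -sizeQR' minnn -(perm_size QQ').
  rewrite -(profile_count_uses HQ) count1; apply: eq_in_count => p pPs.
  by rewrite /= uses_split same_uses ?orbb.
rewrite [theta tau D Ps]theta_split.
suff -> : theta tau D P = theta tau G1 Q + theta tau G2 Rr by exact: lerD.
rewrite /theta EP big_map (eq_big_seq _ (tauP_zip_concat HQ HR QQ' RR')) big_split /=.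
rewrite (perm_big _ QQ') (perm_big _ RR'); congr (_ + _).
  by rewrite -[in RHS](unzip1_zip (eq_leq sizeQR')) big_map.
by rewrite -[in RHS](unzip2_zip (eq_leq (esym sizeQR'))) big_map.
Qed.

Lemma balanced_series Ps Q Rr P : profile G1 Q -> profile G2 Rr ->
  balanced tau G1 Ps Q -> balanced tau G2 Ps Rr ->
  greedy_series tau G1 G2 Q Rr P -> balanced tau D Ps P.
Proof.
move=> HQ HR bQ bR gP; have HP := profile_series HQ HR gP.
move: gP => [QR [Q' [R' [QQ' RR' sQ' sR' EP]]]].
have sizeQR' : size Q' = size R' by rewrite -(perm_size QQ') -(perm_size RR').
pose zs := [seq (tauP tau G1 x.1, tauP tau G2 x.2) | x <- zip Q' R'].
have Pzs : map (tauP tau D) P = map psum zs.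
  by rewrite EP -!map_comp; apply/eq_in_map => x /(tauP_zip_concat HQ HR QQ' RR').
have fst_zs : map fst zs = map (tauP tau G1) Q'.
  by rewrite -map_comp -[in RHS](unzip1_zip (eq_leq sizeQR')) -map_comp.
have snd_zs : map snd zs = map (tauP tau G2) R'.
  by rewrite -map_comp -[in RHS](unzip2_zip (eq_leq (esym sizeQR'))) -map_comp.
rewrite /balanced (sorted_lengths_profile _ HP) Pzs.
apply: balanced_sort_of_excess; first exact: Cmax_ge0.
move=> x low; apply: excess_crossing_sums; last by rewrite has_map in low.
- rewrite pairwise_map.
  apply: (@pairwise_zip _ _ (fun p q => tauP tau G1 q <= tauP tau G1 p)
                           (fun p q => tauP tau G2 p <= tauP tau G2 q)).
    by rewrite -sorted_pairwise // => p1 p2 p3 le21 le13; apply: le_trans le13 le21.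
  by rewrite -sorted_pairwise // => p1 p2 p3 le12 le23; apply: le_trans le12 le23.
- rewrite fst_zs; apply: gaps_before_le (Cmax_left_le Ps) _.
  apply: balanced_gaps_before_profile HQ bQ _ _; first by rewrite sorted_map.
  by apply: perm_map; rewrite perm_sym.
- rewrite snd_zs; apply: gaps_after_rev; apply: gaps_before_le (Cmax_right_le Ps) _.
  apply: balanced_gaps_before_profile HR bR _ _; first by rewrite rev_sorted sorted_map.
  by rewrite perm_rev; apply: perm_map; rewrite perm_sym.
Qed.

Lemma series_composition_sound Ps Q Rr P : {in Ps, uses G1 =1 uses G2} ->
  profile G1 Q -> profile G2 Rr -> consistent tau G1 Ps Q -> consistent tau G2 Ps Rr ->
  balanced tau G1 Ps Q -> balanced tau G2 Ps Rr -> greedy_series tau G1 G2 Q Rr P ->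
  [/\ profile D P, consistent tau D Ps P & balanced tau D Ps P].
Proof.
move=> same_uses HQ HR cQ cR bQ bR gP; split; first exact: profile_series gP.
  exact: consistent_series gP.
exact: balanced_series gP.
Qed.
End Series.
End Composition.

Theorem lemma7 (R : realFieldType) (T : sptree) (tau : nat -> R)
    (tau_ge0 : forall a : nat, (a < nleaves T)%N -> 0 <= tau a)
    (k : nat) (Ps : seq (seq sparc))
    (Hopt : optimal tau (whole T) k Ps)
    (D' : spg) (HD' : is_node (whole T) D') (Hnl : ~~ is_leaf D')
    (Q Rr : seq (seq sparc))
    (HQ : profile (lchild D') Q) (HR : profile (rchild D') Rr)
    (HQc : consistent tau (lchild D') Ps Q)
    (HRc : consistent tau (rchild D') Ps Rr)
    (HQb : balanced tau (lchild D') Ps Q)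
    (HRb : balanced tau (rchild D') Ps Rr) :
  (exists P, greedy_comp tau D' Q Rr P) /\
  (forall P, greedy_comp tau D' Q Rr P ->
     [/\ profile D' P, consistent tau D' Ps P & balanced tau D' Ps P]).
Proof.
have tau_ge0' a : a \in arcs D' -> 0 <= tau (arc_id a).
  have [_ _ _ _ within] := is_node_bounds HD'.
  by move=> /mem_build [a_id _ _]; apply: tau_ge0; lia.
have Ps_paths p : p \in Ps -> is_path (arcs (whole T)) 0 1 p.
  by case: Hopt => HPs _ _; apply: profile_is_path.
have arcsD := arcs_children Hnl; have arcs12 := arcs_children_disjoint Hnl.
case: D' HD' Hnl arcsD arcs12 tau_ge0' HQ HR HQc HRc HQb HRb
  => [[|l r|l r] s t fr off] // HD' _ arcsD arcs12 tau_ge0' HQ HR HQc HRc HQb HRb.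
- set G := SPG (Ser l r) s t fr off in HD' HQ HR HQc HRc HQb HRb *.
  have same_uses : {in Ps, uses (lchild G) =1 uses (rchild G)}.
    by move=> p pPs; apply: ser_uses_eq HD' p (Ps_paths p pPs).
  split; first exact: greedy_series_exists (consistent_size_eq same_uses HQ HR HQc HRc).
  move=> P; apply: (series_composition_sound arcsD arcs12 tau_ge0' erefl erefl erefl
    (ser_children_vertex_disjoint HD')) => //.
- set G := SPG (Par l r) s t fr off in HD' HQ HR HQc HRc HQb HRb *.
  have not_both p : p \in Ps -> ~~ (uses (lchild G) p && uses (rchild G) p).
    by move=> pPs; apply: par_uses_not_both HD' p (Ps_paths p pPs).
  split; first by eexists.
  move=> _ ->; apply: (parallel_composition_sound arcsD arcs12 tau_ge0' erefl erefl erefl erefl)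
    => //.
Qed.
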